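(* Let $X$ be a metrizable space and $A\subset X$. Then the discretization $X_A$ of $X$ by $A$ has a regular base at non-isolated points.
   Context: The discretization $X_A$ is the set $X$ with the topology generated by the base $\{U: U \text{ open in } X\}\cup\{\{x\}:x\in A\}$. A base $\mathcal{B}$ is regular at $x$ if for every neighborhood $U$ of $x$ there is an open $V$ with $x\in V\subset U$ such that $\{B\in\mathcal{B}: B\cap V\neq\emptyset,\ B\not\subset U\}$ is finite; a regular base at non-isolated points is regular at every non-isolated point. *)

From Stdlib Require Import Reals List.
Open Scope R_scope.

Definition is_topology {X : Type} (op : (X -> Prop) -> Prop) : Prop :=
  op (fun _ => True) /\
  (forall U V, op U -> op V -> op (fun x => U x /\ V x)) /\
  (forall F : (X -> Prop) -> Prop, (forall U, F U -> op U) ->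
     op (fun x => exists U, F U /\ U x)).

Definition subset {X : Type} (U V : X -> Prop) : Prop := forall x, U x -> V x.

Definition is_metric {X : Type} (d : X -> X -> R) : Prop :=
  (forall x y, 0 <= d x y) /\
  (forall x y, d x y = 0 <-> x = y) /\
  (forall x y, d x y = d y x) /\
  (forall x y z, d x z <= d x y + d y z).

Definition metric_open {X : Type} (d : X -> X -> R) (U : X -> Prop) : Prop :=
  forall x, U x -> exists eps, 0 < eps /\ subset (fun y => d x y < eps) U.

Definition metrizable {X : Type} (op : (X -> Prop) -> Prop) : Prop :=
  exists d, is_metric d /\ forall U, op U <-> metric_open d U.

Definition is_base {X : Type} (op : (X -> Prop) -> Prop) (B : (X -> Prop) -> Prop) : Prop :=
  (forall b, B b -> op b) /\
  (forall U x, op U -> U x -> exists b, B b /\ b x /\ subset b U).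

Definition generated_topology {X : Type} (B : (X -> Prop) -> Prop) (U : X -> Prop) : Prop :=
  forall x, U x -> exists b, B b /\ b x /\ subset b U.

Definition discr_base {X : Type} (op : (X -> Prop) -> Prop) (A : X -> Prop)
  (b : X -> Prop) : Prop :=
  op b \/ exists x, A x /\ b = (fun y => y = x).

Definition discretization {X : Type} (op : (X -> Prop) -> Prop) (A : X -> Prop)
  : (X -> Prop) -> Prop :=
  generated_topology (discr_base op A).

Definition isolated {X : Type} (op : (X -> Prop) -> Prop) (x : X) : Prop :=
  op (fun y => y = x).

Definition neighborhood {X : Type} (op : (X -> Prop) -> Prop) (x : X) (U : X -> Prop) : Prop :=
  exists W, op W /\ W x /\ subset W U.

Definition finite_family {X : Type} (F : (X -> Prop) -> Prop) : Prop :=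
  exists l : list (X -> Prop), forall b, F b -> In b l.

Definition regular_at {X : Type} (op : (X -> Prop) -> Prop) (B : (X -> Prop) -> Prop)
  (x : X) : Prop :=
  forall U, neighborhood op x U ->
    exists V, op V /\ V x /\ subset V U /\
      finite_family (fun b => B b /\ (exists y, b y /\ V y) /\ ~ subset b U).

Definition regular_base_at_nonisolated {X : Type} (op : (X -> Prop) -> Prop) : Prop :=
  exists B, is_base op B /\ forall x, ~ isolated op x -> regular_at op B x.

(* Fix a metric d on X.  Following A. H. Stone's proof that metric spaces are
   paracompact, a well-ordering of X yields, for every radius r > 0, an open
   cover of X by "pieces": each piece lies in a ball of radius r about its
   centre, and pieces of the same level k with distinct centres are
   rho k = (1/2)^k apart.  This cover is locally finite.

   The base of X_A is then formed by the singletons {a} (a in A) together with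
   the pieces of all radii rho m.  At a point x that is not isolated in X_A,
   every X_A-neighbourhood U of x contains a ball B(x, eps).  Inside a small
   ball V about x, the basic sets meeting V but not contained in U are neither
   singletons (these would lie in V, hence in U) nor pieces of a small radius
   (these would lie in B(x, eps)); they are pieces of one of finitely many
   large radii, and only finitely many of those meet V by local finiteness. *)

From Stdlib Require Import Reals List Lia Lra Classical.
From mathcomp Require ssreflect ssrfun ssrbool eqtype boolp wochoice.
Open Scope R_scope.

Definition prop_well_order {X : Type} (Rw : X -> X -> Prop) : Prop :=
  (forall P : X -> Prop, (exists x, P x) ->
     exists z, P z /\ forall y, P y -> Rw z y) /\
  (forall s t, Rw s t -> Rw t s -> s = t).

Module WellOrdering.
Import ssreflect ssrfun ssrbool eqtype boolp wochoice.

Lemma well_order_exists (X : Type) : exists Rw : X -> X -> Prop, prop_well_order Rw.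
Proof.
have [R wR] := @well_ordering_principle {classic X}.
have wR_chain : wo_chain R predT by exact: withinW.
exists (fun s t => R s t); split.
- move=> P [x Px].
  have [|z [[zP zmin] _]] := wR [pred y | `[< P y >]].
    by exists x; rewrite inE; apply/asboolP.
  exists z; split; first by move: zP; rewrite inE => /asboolP.
  by move=> y Py; apply: zmin; rewrite inE; apply/asboolP.
- move=> s t Rst Rts.
  by apply: (wo_chain_antisymmetric wR_chain) => //; rewrite Rst Rts.
Qed.
End WellOrdering.

Definition rho (k : nat) : R := (/2)^k.

Lemma rho_pos k : 0 < rho k.
Proof. unfold rho; apply pow_lt; lra. Qed.

Lemma rho_S k : rho (S k) = rho k / 2.
Proof. unfold rho; simpl; field. Qed.

Lemma rho_antitone k i : (k <= i)%nat -> rho i <= rho k.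
Proof.
intros Hki. induction Hki as [|i _ IH]; [lra|].
rewrite rho_S. pose proof (rho_pos i). lra.
Qed.

Lemma rho_double k i : (k < i)%nat -> 2 * rho i <= rho k.
Proof. intros Hki. pose proof (rho_antitone (S k) i Hki). rewrite rho_S in H. lra. Qed.

Lemma rho_small e : 0 < e -> exists k, rho k < e.
Proof.
intros He. destruct (pow_lt_1_zero (/2)) with (y := e) as [N HN]; auto.
{ rewrite Rabs_pos_eq; lra. }
exists N. specialize (HN N (le_n _)).
rewrite Rabs_pos_eq in HN; [exact HN | apply pow_le; lra].
Qed.

Lemma finite_family_mono {X : Type} (F G : (X -> Prop) -> Prop) :
  (forall b, F b -> G b) -> finite_family G -> finite_family F.
Proof. intros HFG [l Hl]. exists l. auto. Qed.

Lemma finite_by_levels {X : Type} (F : (X -> Prop) -> Prop)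
  (G : nat -> (X -> Prop) -> Prop) (N : nat) :
  (forall b, F b -> exists i, (i < N)%nat /\ G i b) ->
  (forall i b b', (i < N)%nat -> F b -> F b' -> G i b -> G i b' -> b = b') ->
  finite_family F.
Proof.
intros Hlevel Huniq.
assert (Hupto : forall n, (n <= N)%nat ->
  finite_family (fun b => F b /\ exists i, (i < n)%nat /\ G i b)).
{ induction n as [|n IH]; intros Hn.
  - exists nil. intros b (_ & i & Hi & _). lia.
  - destruct (IH ltac:(lia)) as [l Hl].
    destruct (classic (exists b, F b /\ G n b)) as [(b0 & Fb0 & Gb0) | Hnone].
    + exists (b0 :: l). intros b (Fb & i & Hi & Gb).
      destruct (Nat.lt_ge_cases i n) as [Hin | Hin].
      * right. apply Hl. eauto.
      * left. assert (i = n) by lia. subst i. symmetry. apply (Huniq n); auto; lia.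
    + exists l. intros b (Fb & i & Hi & Gb). apply Hl. split; auto.
      exists i. split; auto.
      destruct (Nat.eq_dec i n) as [-> | Hin]; [exfalso; eauto | lia]. }
apply (finite_family_mono F _ (fun b Fb => conj Fb (Hlevel b Fb)) (Hupto N (le_n N))).
Qed.

Section MetricSpace.
Context {X : Type} (d : X -> X -> R) (Hd : is_metric d).

Lemma dist_refl x : d x x = 0.
Proof. destruct Hd as (_ & H & _). apply H. reflexivity. Qed.

Lemma dist_sym x y : d x y = d y x.
Proof. destruct Hd as (_ & _ & H & _). apply H. Qed.

Lemma dist_triangle x y z : d x z <= d x y + d y z.
Proof. destruct Hd as (_ & _ & _ & H). apply H. Qed.

Lemma ball_open x e : metric_open d (fun y => d x y < e).
Proof.
intros y Hy. exists (e - d x y). split; [lra|].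
intros z Hz. pose proof (dist_triangle x y z). lra.
Qed.

Definition locally_finite (F : (X -> Prop) -> Prop) (x : X) : Prop :=
  exists e, 0 < e /\ finite_family (fun b => F b /\ exists y, b y /\ d x y < e).

Lemma locally_finite_union (F : nat -> (X -> Prop) -> Prop) x n :
  (forall m, (m < n)%nat -> locally_finite (F m) x) ->
  locally_finite (fun b => exists m, (m < n)%nat /\ F m b) x.
Proof.
induction n as [|n IH]; intros HF.
- exists 1. split; [lra|]. exists nil. intros b ((m & Hm & _) & _). lia.
- destruct IH as (e1 & He1 & l1 & Hl1); [intros m Hm; apply HF; lia|].
  destruct (HF n (Nat.lt_succ_diag_r n)) as (e2 & He2 & l2 & Hl2).
  exists (Rmin e1 e2). split; [apply Rmin_pos; auto|].
  exists (l1 ++ l2). intros b ((m & Hm & Fb) & y & By & Hxy). apply in_or_app.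
  pose proof (Rmin_l e1 e2). pose proof (Rmin_r e1 e2).
  destruct (Nat.lt_ge_cases m n) as [Hmn | Hmn].
  + left. apply Hl1. split; [eauto | exists y; split; auto; lra].
  + right. assert (m = n) by lia. subst m. apply Hl2. split; auto.
    exists y. split; auto. lra.
Qed.

Section StoneCover.
Context (Rw : X -> X -> Prop) (Hw : prop_well_order Rw) (r : R) (Hr : 0 < r).

Definition first_center (s p : X) : Prop :=
  d s p < r /\ forall t, d t p < r -> Rw s t.

(* p is a core point of centre s at level k: s is its first centre, p is not
   covered by earlier levels (the set C), and B(p, 3 rho k) lies in B(s, r). *)
Definition core (C : X -> Prop) (k : nat) (s p : X) : Prop :=
  first_center s p /\ ~ C p /\ forall y, d p y < 3 * rho k -> d s y < r.

Definition piece_over (C : X -> Prop) (k : nat) (s y : X) : Prop :=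
  exists p, core C k s p /\ d p y < rho k.

Fixpoint covered (k : nat) : X -> Prop :=
  match k with
  | O => fun _ => False
  | S k => fun y => covered k y \/ exists t, piece_over (covered k) k t y
  end.

Definition piece (k : nat) (s : X) : X -> Prop := piece_over (covered k) k s.

Definition pieces (b : X -> Prop) : Prop := exists k s, b = piece k s.

Lemma piece_in_ball k s y : piece k s y -> d s y < r.
Proof. intros (p & (_ & _ & Hball) & Hpy). apply Hball. pose proof (rho_pos k). lra. Qed.

Lemma piece_diameter k s x y : piece k s x -> piece k s y -> d x y < 2 * r.
Proof.
intros Hx Hy. pose proof (piece_in_ball k s x Hx). pose proof (piece_in_ball k s y Hy).
pose proof (dist_triangle x s y). rewrite (dist_sym x s) in *. lra.
Qed.

Lemma piece_open k s : metric_open d (piece k s).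
Proof.
intros y (p & Hcore & Hpy). exists (rho k - d p y). split; [lra|].
intros z Hz. exists p. split; auto. pose proof (dist_triangle p y z). lra.
Qed.

Lemma covered_of_piece j k t y : (j < k)%nat -> piece j t y -> covered k y.
Proof.
intros Hjk Hy. induction Hjk as [|k _ IH]; simpl; [right; exists t; exact Hy | left; exact IH].
Qed.

Lemma piece_of_covered k y : covered k y -> exists j t, (j < k)%nat /\ piece j t y.
Proof.
induction k as [|k IH]; simpl; [tauto|].
intros [Hy | (t & Hy)].
- destruct (IH Hy) as (j & t & Hj & Ht). exists j, t. split; auto.
- exists k, t. auto.
Qed.

Lemma pieces_cover p : exists k s, piece k s p.
Proof.
destruct Hw as (Hleast & _).
destruct (Hleast (fun s => d s p < r)) as (s & Hsp & Hmin).
{ exists p. rewrite dist_refl. exact Hr. }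
destruct (rho_small ((r - d s p) / 3)) as [k Hk]; [lra|].
destruct (classic (covered k p)) as [Hcov | Hcov].
- destruct (piece_of_covered k p Hcov) as (j & t & _ & Hj). eauto.
- exists k, s, p. rewrite dist_refl. split; [|apply rho_pos].
  split; [split; auto|]. split; auto.
  intros y Hy. pose proof (dist_triangle s p y). lra.
Qed.

Lemma core_center_unique C k s t p q :
  core C k s p -> core C k t q -> d p q < 3 * rho k -> s = t.
Proof.
intros ((_ & Hs_least) & _ & Hs_ball) ((_ & Ht_least) & _ & Ht_ball) Hpq.
destruct Hw as (_ & Hanti). apply Hanti.
- apply Hs_least, Ht_ball. rewrite dist_sym. exact Hpq.
- apply Ht_least, Hs_ball. exact Hpq.
Qed.

Lemma pieces_separated k s t x y :
  s <> t -> piece k s x -> piece k t y -> rho k <= d x y.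
Proof.
intros Hst (p & Hp & Hpx) (q & Hq & Hqy).
destruct (Rlt_or_le (d x y) (rho k)) as [Hxy | Hxy]; [exfalso | exact Hxy].
apply Hst, (core_center_unique _ k s t p q Hp Hq).
pose proof (dist_triangle p x q). pose proof (dist_triangle x y q).
rewrite (dist_sym y q) in *. lra.
Qed.

(* Local finiteness: near x, later levels are empty because a neighbourhood of
   x is already covered, and each earlier level contributes at most one piece
   because its pieces are separated. *)
Lemma pieces_locally_finite x : locally_finite pieces x.
Proof.
destruct (pieces_cover x) as (j & t & Hjt).
destruct (piece_open j t x Hjt) as (e0 & He0 & Hball).
destruct (rho_small e0 He0) as [k Hk].
set (N := (j + k + 1)%nat).
exists (rho N). split; [apply rho_pos|].
apply (finite_by_levels _ (fun i b => exists s, b = piece i s) N).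
- intros b ((i & s & ->) & y & Hy & Hxy). exists i. split; [|eauto].
  destruct (Nat.lt_ge_cases i N) as [HiN | HiN]; [exact HiN | exfalso].
  destruct Hy as (p & (_ & Hnot_cov & _) & Hpy).
  apply Hnot_cov, (covered_of_piece j i t); [unfold N in HiN; lia|].
  apply Hball. pose proof (dist_triangle x y p). rewrite (dist_sym y p) in *.
  pose proof (rho_double k i ltac:(unfold N in HiN; lia)).
  pose proof (rho_double k N ltac:(unfold N; lia)). lra.
- intros i b b' HiN (_ & y & Hy & Hxy) (_ & y' & Hy' & Hxy') (s & ->) (s' & ->).
  destruct (classic (s = s')) as [-> | Hss']; [reflexivity | exfalso].
  pose proof (pieces_separated i s s' y y' Hss' Hy Hy').
  pose proof (dist_triangle y x y'). rewrite (dist_sym y x) in *.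
  pose proof (rho_double i N HiN). lra.
Qed.

End StoneCover.
End MetricSpace.

Lemma open_in_discretization {X : Type} (op : (X -> Prop) -> Prop) A U :
  op U -> discretization op A U.
Proof. intros HU x Ux. exists U. split; [left; exact HU | split; [exact Ux | intros y; auto]]. Qed.

Lemma singleton_open_in_discretization {X : Type} (op : (X -> Prop) -> Prop) A (a : X) :
  A a -> discretization op A (fun y => y = a).
Proof.
intros Aa y ->. exists (fun z => z = a).
split; [right; eauto | split; [reflexivity | intros z; auto]].
Qed.

(* A neighbourhood in X_A of a point that is not isolated in X_A contains an
   open set of X around the point: the point is not in A. *)
Lemma nonisolated_neighborhood {X : Type} (op : (X -> Prop) -> Prop) A (x : X) U :
  ~ isolated (discretization op A) x -> neighborhood (discretization op A) x U ->
  exists W, op W /\ W x /\ subset W U.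
Proof.
intros Hni (W & HW & Wx & WU).
destruct (HW x Wx) as (b & [Hb | (a & Aa & ->)] & bx & bW).
- exists b. split; [exact Hb | split; [exact bx | intros y By; apply WU, bW, By]].
- exfalso. apply Hni. simpl in bx. subst a. apply singleton_open_in_discretization, Aa.
Qed.

Section DiscretizationBase.
Context {X : Type} (op : (X -> Prop) -> Prop) (d : X -> X -> R) (Hd : is_metric d)
  (Hop : forall U, op U <-> metric_open d U) (A : X -> Prop)
  (Rw : X -> X -> Prop) (Hw : prop_well_order Rw).

Definition stone_base (b : X -> Prop) : Prop :=
  (exists a, A a /\ b = fun y => y = a) \/ exists m, pieces d Rw (rho m) b.

(* Every open set of X contains, around each of its points, a piece of small
   radius containing that point, since pieces of radius r have diameter < 2 r. *)
Lemma stone_base_is_base : is_base (discretization op A) stone_base.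
Proof.
split.
- intros b [(a & Aa & ->) | (m & k & s & ->)].
  + apply singleton_open_in_discretization, Aa.
  + apply open_in_discretization, Hop, piece_open, Hd.
- intros U x HU Ux. destruct (HU x Ux) as (b & [Hb | Hb] & bx & bU).
  + apply Hop in Hb. destruct (Hb x bx) as (e & He & Hball).
    destruct (rho_small e He) as [m Hm].
    destruct (pieces_cover d Hd Rw Hw (rho (S m)) (rho_pos _) x) as (k & s & Hks).
    exists (piece d Rw (rho (S m)) k s). split; [right; exists (S m), k, s; reflexivity|].
    split; [exact Hks|]. intros y Hy. apply bU, Hball.
    pose proof (piece_diameter d Hd Rw (rho (S m)) k s x y Hks Hy). rewrite rho_S in *. lra.
  + exists b. split; [left; exact Hb | auto].
Qed.

Lemma stone_base_regular x :
  ~ isolated (discretization op A) x -> regular_at (discretization op A) stone_base x.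
Proof.
intros Hni U HU.
destruct (nonisolated_neighborhood op A x U Hni HU) as (W & HW & Wx & WU).
apply Hop in HW. destruct (HW x Wx) as (eps & Heps & Hball).
destruct (rho_small (eps / 2)) as [M HM]; [lra|].
destruct (locally_finite_union d (fun m => pieces d Rw (rho m)) x (S M)) as (e & He & Hfin).
{ intros m _. apply pieces_locally_finite; [exact Hd | exact Hw | apply rho_pos]. }
set (del := Rmin e (eps / 2)).
pose proof (Rmin_l e (eps / 2)). pose proof (Rmin_r e (eps / 2)).
assert (Hin_U : forall y, d x y < eps -> U y) by (intros y Hy; apply WU, Hball, Hy).
exists (fun y => d x y < del). split; [|split; [|split]].
- apply open_in_discretization, Hop, ball_open, Hd.
- rewrite (dist_refl d Hd). apply Rmin_pos; lra.
- intros y Hy. apply Hin_U. unfold del in Hy. lra.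
- apply (finite_family_mono _ _) with (2 := Hfin).
  intros b (Hb & (y & By & Vy) & Hnot_sub). unfold del in Vy.
  destruct Hb as [(a & Aa & ->) | (m & k & s & ->)].
  + exfalso. apply Hnot_sub. intros z ->. simpl in By. subst y. apply Hin_U. lra.
  + split; [|exists y; split; [exact By | lra]].
    destruct (Nat.lt_ge_cases m (S M)) as [Hm | Hm].
    * exists m. split; [exact Hm | exists k, s; reflexivity].
    * exfalso. apply Hnot_sub. intros z Hz. apply Hin_U.
      pose proof (piece_diameter d Hd Rw (rho m) k s y z By Hz).
      pose proof (rho_double M m Hm). pose proof (dist_triangle d Hd x y z). lra.
Qed.

End DiscretizationBase.

Theorem mainTheorem12 (X : Type) (op : (X -> Prop) -> Prop)
  (Htop : is_topology op) (Hmet : metrizable op) (A : X -> Prop) :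
  regular_base_at_nonisolated (discretization op A).
Proof.
destruct Hmet as (d & Hd & Hop).
destruct (WellOrdering.well_order_exists X) as (Rw & Hw).
exists (stone_base d A Rw). split.
- apply stone_base_is_base; assumption.
- apply stone_base_regular; assumption.
Qed.
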